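(* Let $E$ be a graph such that any two boundary paths of $E$ are shift-tail equivalent. Then every nonempty saturated hereditary subset of $E^0$ is equal to $E^0$.
   Context: A graph $E=(E^0,E^1,r,s)$ has vertex set $E^0$, edge set $E^1$, range and source maps. A vertex is singular if it emits no edges or infinitely many edges, regular otherwise. $H\subseteq E^0$ is hereditary if $s(e)\in H$ implies $r(e)\in H$ for every $e\in E^1$; it is saturated if every regular vertex $v$ with $r(s^{-1}(v))\subseteq H$ lies in $H$. Boundary paths: infinite paths $e_1e_2\cdots$ ($r(e_i)=s(e_{i+1})$) together with finite paths (including vertices as length-$0$ paths) whose range is singular. The shift $\sigma_E$ removes the first edge (fixes vertices; sends a single edge $e$ to $r(e)$); boundary paths $\alpha,\beta$ are shift-tail equivalent if $\sigma_E^m(\alpha)=\sigma_E^n(\beta)$ for some $m,n\in\mathbb{N}$. *)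

From Stdlib Require Import List.
Import ListNotations.

Section Graph.
Context {V Ed : Type} (r s : Ed -> V).

Definition emits_finitely (v : V) : Prop :=
  exists l : list Ed, forall e, s e = v -> In e l.

Definition singular (v : V) : Prop :=
  (forall e, s e <> v) \/ ~ emits_finitely v.

Definition regular (v : V) : Prop := ~ singular v.

Definition hereditary (H : V -> Prop) : Prop :=
  forall e, H (s e) -> H (r e).

Definition saturated (H : V -> Prop) : Prop :=
  forall v, regular v -> (forall e, s e = v -> H (r e)) -> H v.

(* Candidate paths: a vertex (length 0), a nonempty finite edge sequence
   e :: l, or an infinite edge sequence f 0, f 1, ... *)
Inductive gpath : Type :=
  | PVert : V -> gpath
  | PFin : Ed -> list Ed -> gpath
  | PInf : (nat -> Ed) -> gpath.

Fixpoint chain (e : Ed) (l : list Ed) : Prop :=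
  match l with
  | [] => True
  | e' :: l' => r e = s e' /\ chain e' l'
  end.

Definition is_boundary_path (p : gpath) : Prop :=
  match p with
  | PVert v => singular v
  | PFin e l => chain e l /\ singular (r (last l e))
  | PInf f => forall n, r (f n) = s (f (S n))
  end.

Definition shift (p : gpath) : gpath :=
  match p with
  | PVert v => PVert v
  | PFin e [] => PVert (r e)
  | PFin _ (e' :: l) => PFin e' l
  | PInf f => PInf (fun n => f (S n))
  end.

Definition shift_tail_equiv (a b : gpath) : Prop :=
  exists m n : nat, Nat.iter m shift a = Nat.iter n shift b.

End Graph.

(* Call P "extendable" if every regular vertex in P emits an edge whose range is in P.
   From each vertex of an extendable P starts a boundary path staying in P: otherwise the
   vertices of P from which no such path starts are regular and can be followed forever
   inside themselves, and that infinite path is such a path after all.  A hereditary set H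
   is extendable, and saturation says exactly that its complement is extendable too.  If H
   and its complement are both nonempty, we get a boundary path inside H and one outside H;
   being shift-tail equivalent they share a vertex, which is absurd. *)
From Stdlib Require Import List Classical ClassicalEpsilon.
Import ListNotations.

Section BoundaryPaths.
Context {V Ed : Type} (r s : Ed -> V).

Definition source (p : @gpath V Ed) : V :=
  match p with
  | PVert v => v
  | PFin e _ => s e
  | PInf f => s (f 0)
  end.

Definition on_path (p : @gpath V Ed) (v : V) : Prop :=
  match p with
  | PVert u => v = u
  | PFin e l => exists x, In x (e :: l) /\ (v = s x \/ v = r x)
  | PInf f => exists n, v = s (f n) \/ v = r (f n)
  end.

Definition within (P : V -> Prop) (p : @gpath V Ed) : Prop :=
  forall v, on_path p v -> P v.

Lemma on_path_source p : on_path p (source p).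
Proof.
  destruct p as [v | e l | f]; simpl.
  - reflexivity.
  - exists e. split; [left | left]; reflexivity.
  - exists 0. left. reflexivity.
Qed.

Lemma on_path_shift p v : on_path (shift r p) v -> on_path p v.
Proof.
  destruct p as [u | e [| e' l] | f]; simpl.
  - trivial.
  - intros ->. exists e. split; [left | right]; reflexivity.
  - intros [x [Hx Hv]]. exists x. split; [right |]; assumption.
  - intros [n Hn]. exists (S n). exact Hn.
Qed.

Lemma on_path_iter_shift n p v : on_path (Nat.iter n (shift r) p) v -> on_path p v.
Proof.
  induction n as [| n IH]; simpl; [trivial |].
  intro Hv. apply IH, on_path_shift, Hv.
Qed.

Lemma shift_tail_equiv_common_vertex a b :
  shift_tail_equiv r a b -> exists v, on_path a v /\ on_path b v.
Proof.
  intros [m [n Hmn]].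
  exists (source (Nat.iter m (shift r) a)). split.
  - apply (on_path_iter_shift m), on_path_source.
  - rewrite Hmn. apply (on_path_iter_shift n), on_path_source.
Qed.

Definition cons_edge (e : Ed) (p : @gpath V Ed) : @gpath V Ed :=
  match p with
  | PVert _ => PFin e []
  | PFin e' l => PFin e (e' :: l)
  | PInf f => PInf (fun n => match n with 0 => e | S k => f k end)
  end.

Lemma source_cons_edge e p : source (cons_edge e p) = s e.
Proof. destruct p; reflexivity. Qed.

Lemma last_cons_default (a d : Ed) l : last (a :: l) d = last l a.
Proof.
  revert a d. induction l as [| x l IH]; intros a d; [reflexivity |].
  change (last (x :: l) d = last (x :: l) a). rewrite !IH. reflexivity.
Qed.

Lemma boundary_cons_edge e p :
  r e = source p -> is_boundary_path r s p -> is_boundary_path r s (cons_edge e p).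
Proof.
  destruct p as [v | e' l | f]; simpl.
  - intros <- Hsing. split; [exact I | exact Hsing].
  - intros Hre [Hchain Hsing]. split.
    + split; assumption.
    + change (singular s (r (last (e' :: l) e))). rewrite last_cons_default. exact Hsing.
  - intros Hre Hf [| n]; [exact Hre | apply Hf].
Qed.

Lemma on_path_cons_edge e p v :
  on_path (cons_edge e p) v -> v = s e \/ v = r e \/ on_path p v.
Proof.
  destruct p as [u | e' l | f]; simpl.
  - intros [x [[<- | []] [-> | ->]]]; auto.
  - intros [x [[<- | Hx] Hv]].
    + destruct Hv; auto.
    + right; right. exists x. auto.
  - intros [[| n] Hn].
    + destruct Hn; auto.
    + right; right. exists n. exact Hn.
Qed.

Lemma within_cons_edge P e p :
  P (s e) -> r e = source p -> within P p -> within P (cons_edge e p).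
Proof.
  intros Hse Hre Hp v Hv.
  destruct (on_path_cons_edge e p v Hv) as [-> | [-> | Hvp]].
  - exact Hse.
  - rewrite Hre. apply Hp, on_path_source.
  - apply Hp, Hvp.
Qed.

Lemma within_weaken (P Q : V -> Prop) p :
  (forall v, P v -> Q v) -> within P p -> within Q p.
Proof. intros HPQ Hp v Hv. apply HPQ, Hp, Hv. Qed.

Lemma infinite_path_within (A : V -> Prop) :
  (forall v, A v -> exists e, s e = v /\ A (r e)) ->
  forall v, A v -> exists p, is_boundary_path r s p /\ within A p /\ source p = v.
Proof.
  intros Hnext v Hv.
  pose (next_edge := fun x : {u | A u} =>
          constructive_indefinite_description _ (Hnext _ (proj2_sig x))).
  pose (next := fun x : {u | A u} =>
          exist A (r (proj1_sig (next_edge x))) (proj2 (proj2_sig (next_edge x)))).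
  pose (f := fun n => proj1_sig (next_edge (Nat.iter n next (exist A v Hv)))).
  assert (Hs : forall n, s (f n) = proj1_sig (Nat.iter n next (exist A v Hv))).
  { intro n. exact (proj1 (proj2_sig (next_edge _))). }
  assert (Hr : forall n, r (f n) = proj1_sig (Nat.iter (S n) next (exist A v Hv))).
  { reflexivity. }
  exists (PInf f). split; [| split].
  - intro n. rewrite Hr, Hs. reflexivity.
  - intros u [n [Hu | Hu]]; rewrite Hu; [rewrite Hs | rewrite Hr]; apply proj2_sig.
  - apply (Hs 0).
Qed.

Definition extendable (P : V -> Prop) : Prop :=
  forall v, P v -> regular s v -> exists e, s e = v /\ P (r e).

Lemma boundary_path_within (P : V -> Prop) :
  extendable P ->
  forall v, P v -> exists p, is_boundary_path r s p /\ within P p /\ source p = v.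
Proof.
  intros HP.
  set (starts := fun v => exists p, is_boundary_path r s p /\ within P p /\ source p = v).
  assert (Hbad : forall v, P v /\ ~ starts v ->
                   exists e, s e = v /\ P (r e) /\ ~ starts (r e)).
  { intros v [Hv Hnot].
    assert (Hreg : regular s v).
    { intro Hsing. apply Hnot. exists (PVert v). split; [exact Hsing |].
      split; [intros u -> ; exact Hv | reflexivity]. }
    destruct (HP v Hv Hreg) as [e [He HPe]].
    exists e. split; [exact He | split; [exact HPe |]].
    intros [p [Bp [Wp Sp]]]. apply Hnot.
    exists (cons_edge e p). split; [| split].
    - apply boundary_cons_edge; [symmetry; exact Sp | exact Bp].
    - apply within_cons_edge; [rewrite He; exact Hv | symmetry; exact Sp | exact Wp].
    - rewrite source_cons_edge. exact He. }
  intros v Hv. apply NNPP. intro Hnot.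
  destruct (infinite_path_within (fun u => P u /\ ~ starts u)) with v
    as [p [Bp [Wp Sp]]].
  - intros u Hu. destruct (Hbad u Hu) as [e [He HAe]]. exists e. split; assumption.
  - auto.
  - apply Hnot. exists p. split; [exact Bp | split; [| exact Sp]].
    apply (within_weaken _ _ p (fun u Hu => proj1 Hu) Wp).
Qed.

Lemma regular_emits v : regular s v -> exists e, s e = v.
Proof.
  intro Hreg. apply NNPP. intro Hnone. apply Hreg. left.
  intros e He. apply Hnone. exists e. exact He.
Qed.

Lemma hereditary_extendable H : hereditary r s H -> extendable H.
Proof.
  intros Hher v Hv Hreg. destruct (regular_emits v Hreg) as [e He].
  exists e. split; [exact He |]. apply Hher. rewrite He. exact Hv.
Qed.

Lemma saturated_compl_extendable H : saturated r s H -> extendable (fun v => ~ H v).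
Proof.
  intros Hsat v Hv Hreg. apply NNPP. intro Hnone. apply Hv, Hsat; [exact Hreg |].
  intros e He. apply NNPP. intro HnHe. apply Hnone. exists e. auto.
Qed.

End BoundaryPaths.

Theorem lemma4p4 (V Ed : Type) (r s : Ed -> V) :
  (forall a b : gpath, is_boundary_path r s a -> is_boundary_path r s b ->
     shift_tail_equiv r a b) ->
  forall H : V -> Prop,
    (exists v, H v) -> hereditary r s H -> saturated r s H ->
    forall v, H v.
Proof.
  intros Htail H [w Hw] Hher Hsat v. apply NNPP. intro Hv.
  destruct (boundary_path_within r s H (hereditary_extendable r s H Hher) w Hw)
    as [a [Ba [Wa _]]].
  destruct (boundary_path_within r s _ (saturated_compl_extendable r s H Hsat) v Hv)
    as [b [Bb [Wb _]]].
  destruct (shift_tail_equiv_common_vertex r s a b (Htail a b Ba Bb)) as [x [Hxa Hxb]].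
  exact (Wb x Hxb (Wa x Hxa)).
Qed.
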